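(* Let $n,k$ be positive integers and $t$ a real number with $2k<n\leq tk$. Let $h(n,k)=\binom{n-1}{k-1}-\binom{n-k-1}{k-1}+1$. Then \[ \frac{h(n,k)^2}{\binom{n-1}{k-1}^2}>1-2\left(\frac{2t-3}{2t-1}\right)^{k-1}. \] *)

From mathcomp Require Import all_boot.
From Stdlib Require Import Reals.

(* h(n,k) = C(n-1,k-1) - C(n-k-1,k-1) + 1, as a natural number.
   The subtraction is never truncated since C(n-k-1,k-1) <= C(n-1,k-1). *)
Definition h (n k : nat) : nat := 'C(n.-1, k.-1) - 'C(n - k - 1, k.-1) + 1.

(* Write N = C(n-1, k-1) and M = C(n-k-1, k-1).  Then M/N is the product of
   the k-1 factors 1 - k/x for x = n-k+1, ..., n-1.  Since x |-> 1 - k/x is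
   midpoint log-concave, (1 - k/a)(1 - k/b) <= (1 - k/((a+b)/2))^2, pairing
   factors symmetric about n - k/2 gives M/N <= (1 - k/(n - k/2))^(k-1), and
   n <= t k bounds the base by q = (2t-3)/(2t-1).  Finally h = N - M + 1, so
   h^2/N^2 > (1 - M/N)^2 >= 1 - 2 M/N >= 1 - 2 q^(k-1). *)

From mathcomp Require Import all_boot zify.
From Stdlib Require Import Reals Lra Lia.

Set Implicit Arguments.
Unset Strict Implicit.

Lemma nat_ind2 (P : nat -> Prop) :
  P 0 -> P 1 -> (forall j, P j -> P (S (S j))) -> forall j, P j.
Proof.
move=> P0 P1 PSS; fix IH 1 => -[|[|j]]; [exact: P0 | exact: P1 | exact: PSS j (IH j)].
Qed.

Section ShiftedProduct.
Local Open Scope R_scope.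
Variables (f : R -> R) (c : R).
Hypothesis f_ge0 : forall x, c <= x -> 0 <= f x.
Hypothesis f_midpoint :
  forall a b, c <= a -> c <= b -> f a * f b <= f ((a + b) / 2) ^ 2.

Fixpoint prod_shift (s : R) (j : nat) : R :=
  if j is S j then f s * prod_shift (s + 1) j else 1.

Lemma prod_shiftSr j s : prod_shift s (S j) = prod_shift s j * f (s + INR j).
Proof.
elim: j s => [|j IH] s; first by rewrite /= Rplus_0_r; ring.
have -> : prod_shift s j.+2 = f s * prod_shift (s + 1) j.+1 by [].
rewrite IH S_INR /=.
by rewrite (_ : s + 1 + INR j = s + (INR j + 1)); ring.
Qed.

Lemma prod_shift_ge0 j s : c <= s -> 0 <= prod_shift s j.
Proof.
elim: j s => [|j IH] s cs /=; first lra.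
by apply: Rmult_le_pos; [exact: f_ge0 | apply: IH; lra].
Qed.

(* Pair the first factor with the last one: their arguments average to the
   midpoint of the whole range. *)
Lemma prod_shift_le_pow_mid j s :
  c <= s -> prod_shift s j <= f (s + (INR j - 1) / 2) ^ j.
Proof.
elim/nat_ind2: j s => [||j IH] s cs.
- by rewrite /=; lra.
- by rewrite /= (_ : s + (1 - 1) / 2 = s); lra.
have -> : prod_shift s j.+2 = f s * prod_shift (s + 1) j.+1 by [].
rewrite prod_shiftSr.
have j0 := pos_INR j.
set m := s + (INR j.+2 - 1) / 2.
have -> : f m ^ j.+2 = f m ^ j * f m ^ 2 by rewrite /=; ring.
rewrite -Rmult_assoc (Rmult_comm (f s)) Rmult_assoc.
apply: Rmult_le_compat.
- apply: prod_shift_ge0; lra.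
- by apply: Rmult_le_pos; apply: f_ge0; lra.
- have -> : m = s + 1 + (INR j - 1) / 2 by rewrite /m !S_INR; field.
  by apply: IH; lra.
have -> : m = (s + (s + 1 + INR j)) / 2 by rewrite /m !S_INR; field.
by apply: f_midpoint; lra.
Qed.

End ShiftedProduct.

Section OneSubDiv.
Local Open Scope R_scope.
Variable c : R.
Hypothesis c_gt0 : 0 < c.

Definition one_sub_div (x : R) : R := 1 - c / x.

Lemma one_sub_div_ge0 x : c <= x -> 0 <= one_sub_div x.
Proof.
move=> cx; rewrite /one_sub_div.
have -> : 1 - c / x = (x - c) * / x by field; lra.
by apply: Rmult_le_pos; [|apply/Rlt_le/Rinv_0_lt_compat]; lra.
Qed.

Lemma one_sub_div_midpoint a b : c <= a -> c <= b ->
  one_sub_div a * one_sub_div b <= one_sub_div ((a + b) / 2) ^ 2.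
Proof.
move=> ca cb; rewrite /one_sub_div.
have -> : (1 - c / ((a + b) / 2)) ^ 2 = (1 - c / a) * (1 - c / b)
    + c * (a + b - c) * (a - b) ^ 2 / (a * b * (a + b) ^ 2)
  by field; repeat split; lra.
suff : 0 <= c * (a + b - c) * (a - b) ^ 2 / (a * b * (a + b) ^ 2) by lra.
apply: Rmult_le_pos.
- by apply: Rmult_le_pos; [apply: Rmult_le_pos | apply: pow2_ge_0]; lra.
- apply/Rlt_le/Rinv_0_lt_compat/Rmult_lt_0_compat; last by apply: pow_lt; lra.
  by apply: Rmult_lt_0_compat; lra.
Qed.

End OneSubDiv.

Lemma INR_ffact_ratio a k j : j <= a ->
  (INR (a ^_ j) = prod_shift (one_sub_div (INR k)) (INR (a + k - j) + 1) j
                  * INR ((a + k) ^_ j))%R.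
Proof.
elim: j a => [|j IH] a ja; first by rewrite !ffactn0 /=; ring.
case: a ja => // a ja.
rewrite addSn !ffactnS !succnK subSS prod_shiftSr !mult_INR (IH a ja).
have -> : (INR (a + k - j) + 1 + INR j = INR (a + k).+1)%R.
  rewrite minus_INR; last by lia.
  by rewrite !S_INR; ring.
rewrite /one_sub_div !S_INR plus_INR.
have a0 := pos_INR a; have k0 := pos_INR k.
by field; lra.
Qed.

Lemma INR_bin_ratio a k j : j <= a ->
  (INR 'C(a, j) = prod_shift (one_sub_div (INR k)) (INR (a + k - j) + 1) j
                  * INR 'C(a + k, j))%R.
Proof.
move=> ja; have fact_gt0 : (0 < INR j`!)%R by apply/lt_0_INR/ltP/fact_gt0.
apply: (Rmult_eq_reg_r (INR j`!)); last lra.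
by rewrite Rmult_assoc -!mult_INR !multE !bin_ffact; exact: INR_ffact_ratio.
Qed.

Section RealBounds.
Local Open Scope R_scope.

Lemma one_sub_div_mid_le x y t : 0 < x -> 2 * x < y -> y <= t * x ->
  one_sub_div x (y - x / 2) <= (2 * t - 3) / (2 * t - 1).
Proof.
move=> x0 xy yt; have t2 : 2 < t by nra.
rewrite /one_sub_div.
have -> : (2 * t - 3) / (2 * t - 1) = 1 - 2 / (2 * t - 1) by field; lra.
suff : 2 / (2 * t - 1) <= x / (y - x / 2) by lra.
apply: (Rmult_le_reg_r ((2 * t - 1) * (y - x / 2))); first nra.
have -> : 2 / (2 * t - 1) * ((2 * t - 1) * (y - x / 2)) = 2 * y - x by field; lra.
have -> : x / (y - x / 2) * ((2 * t - 1) * (y - x / 2)) = x * (2 * t - 1) by field; lra.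
lra.
Qed.

Lemma sub_div_lt_sqr_ratio N M Q : 0 < N -> M <= N -> M <= N * Q ->
  1 - 2 * Q < (N - M + 1) ^ 2 / N ^ 2.
Proof.
move=> N0 MN MQ.
have N20 : 0 < N ^ 2 by apply: pow_lt.
apply: (Rmult_lt_reg_r (N ^ 2)) => //.
have -> : (N - M + 1) ^ 2 / N ^ 2 * N ^ 2 = (N - M + 1) ^ 2 by field; lra.
nra.
Qed.

End RealBounds.

Lemma bin_ratio_le n k t : 0 < k -> k.*2 < n -> (INR n <= t * INR k)%R ->
  (INR 'C(n - k - 1, k.-1)
     <= INR 'C(n.-1, k.-1) * ((2 * t - 3) / (2 * t - 1)) ^ k.-1)%R.
Proof.
move=> k_gt0 k2n nt.
set j := k.-1; set a := n - k - 1.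
have ja : j <= a by rewrite /j /a; lia.
have kR : (0 < INR k)%R by apply/lt_0_INR/ltP.
have k2nR : (2 * INR k < INR n)%R.
  by rewrite -(mult_INR 2) multE mul2n; apply/lt_INR/ltP.
have midE : (INR (a + k - j) + 1 + (INR j - 1) / 2 = INR n - INR k / 2)%R.
  have -> : a + k - j = n - k by rewrite /a /j; lia.
  rewrite minus_INR; last lia.
  have -> : INR k = (INR j + 1)%R by rewrite -S_INR /j; congr INR; lia.
  field.
have -> : n.-1 = a + k by rewrite /a; lia.
rewrite (INR_bin_ratio k ja) Rmult_comm.
apply: Rmult_le_compat_l; first exact: pos_INR.
apply: (Rle_trans _ (one_sub_div (INR k) (INR n - INR k / 2) ^ j)).
- rewrite -midE; apply: prod_shift_le_pow_mid.
  + exact: one_sub_div_ge0.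
  + exact: one_sub_div_midpoint.
  + have : (INR k <= INR (a + k - j))%R by apply/le_INR/leP; rewrite /a /j; lia.
    lra.
- apply: pow_incr; split; last exact: one_sub_div_mid_le.
  apply: one_sub_div_ge0; lra.
Qed.

Theorem proposition1p8 (n k : nat) (t : R) :
  (0 < k)%N -> (0 < n)%N -> (k.*2 < n)%N -> (INR n <= t * INR k)%R ->
  (1 - 2 * ((2 * t - 3) / (2 * t - 1)) ^ (k.-1)
    < (INR (h n k)) ^ 2 / (INR 'C(n.-1, k.-1)) ^ 2)%R.
Proof.
move=> k_gt0 _ k2n nt.
have binCE : 'C(n - k - 1, k.-1) <= 'C(n.-1, k.-1) by apply: leq_bin2l; lia.
rewrite /h plus_INR minus_INR; last exact/leP.
apply: sub_div_lt_sqr_ratio.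
- by apply/lt_0_INR/ltP; rewrite bin_gt0; lia.
- exact/le_INR/leP.
- exact: bin_ratio_le.
Qed.
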